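(* Let $X$ be a finite connected quandle. Then its type $t_X$ divides $|\mathrm{Inn}(X)|/|X|$.
   Context: A quandle is a set $X$ with a binary operation $\lhd$ such that $a\lhd a=a$ for all $a$, each map $x\mapsto x\lhd a$ is a bijection of $X$, and $(a\lhd b)\lhd c=(a\lhd c)\lhd(b\lhd c)$ for all $a,b,c$. The adjoint group $\mathrm{As}(X)$ is the group with generators $e_x$ ($x\in X$) and relations $e_{x\lhd y}=e_y^{-1}e_xe_y$. It acts on $X$ from the right by $x\cdot e_y=x\lhd y$; $X$ is connected if this action is transitive; $\mathrm{Inn}(X)\subset\mathfrak S_X$ is the image of the corresponding homomorphism $\mathrm{As}(X)\to\mathfrak S_X$. $x\lhd^N y$ denotes the $N$-fold application of $\bullet\lhd y$ to $x$; the type $t_X$ is the smallest positive integer $N$ with $x\lhd^N y=x$ for all $x,y\in X$ (it exists for finite $X$). *)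

From mathcomp Require Import all_boot all_fingroup.
Set Implicit Arguments. Unset Strict Implicit. Unset Printing Implicit Defensive.
Local Open Scope group_scope.

(* A quandle structure on a finite type T, given by the operation op x y = x <| y. *)
Definition is_quandle (T : finType) (op : T -> T -> T) : Prop :=
  [/\ (forall a : T, op a a = a),
      (forall a : T, bijective (fun x => op x a)) &
      (forall a b c : T, op (op a b) c = op (op a c) (op b c))].

(* Inn(X): the subgroup of Sym(X) generated by the right translations x |-> x <| y,
   i.e. the image of As(X) -> Sym(X). *)
Definition Inn (T : finType) (op : T -> T -> T) : {group {perm T}} :=
  <<[set p : {perm T} | [exists y : T, [forall x : T, p x == op x y]]]>>%G.

Definition connected_quandle (T : finType) (op : T -> T -> T) : Prop :=
  forall x y : T, exists2 g, g \in Inn op & g x = y.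

Definition type_annihilates (T : finType) (op : T -> T -> T) (N : nat) : Prop :=
  forall x y : T, iter N (fun z => op z y) x = x.

Definition is_quandle_type (T : finType) (op : T -> T -> T) (N : nat) : Prop :=
  [/\ 0 < N, type_annihilates op N &
      forall M, 0 < M -> type_annihilates op M -> N <= M].

From mathcomp Require Import all_boot all_fingroup all_solvable.
Set Implicit Arguments. Unset Strict Implicit. Unset Printing Implicit Defensive.
Local Open Scope group_scope.

(* Inn(X) consists of quandle automorphisms, so conjugating the right
   translation by y with g in Inn(X) gives the right translation by g y.  By
   connectedness all right translations are therefore conjugate, hence of the
   same order, and that common order is the type t_X.  The right translation by
   x fixes x (x <| x = x), so its cyclic group lies in the stabiliser of x, whose
   order is |Inn(X)|/|X| by the orbit-stabiliser theorem. *)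

Section RightTranslations.

Variables (T : finType) (op : T -> T -> T).
Hypothesis opQ : is_quandle op.

Lemma rtrans_inj (y : T) : injective (fun x => op x y).
Proof. by case: opQ => _ opbij _; apply/bij_inj/opbij. Qed.

Definition rtrans (y : T) : {perm T} := perm (@rtrans_inj y).

Lemma rtransE (y x : T) : rtrans y x = op x y.
Proof. by rewrite permE. Qed.

Lemma rtransX (y x : T) (n : nat) :
  (rtrans y ^+ n) x = iter n (fun z => op z y) x.
Proof. by rewrite permX; apply: eq_iter => z; rewrite rtransE. Qed.

Lemma rtrans_Inn (y : T) : rtrans y \in Inn op.
Proof.
by apply: mem_gen; rewrite inE; apply/existsP; exists y; apply/forallP => x; rewrite rtransE.
Qed.

Lemma rtrans_fix (x : T) : rtrans x x = x.
Proof. by rewrite rtransE; case: opQ. Qed.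

Definition quandle_aut : {set {perm T}} :=
  [set p : {perm T} | [forall a, forall b, p (op a b) == op (p a) (p b)]].

Lemma quandle_autP (p : {perm T}) :
  reflect (forall a b, p (op a b) = op (p a) (p b)) (p \in quandle_aut).
Proof.
rewrite inE; apply: (iffP forallP) => [hp a b | hp a].
  by apply/eqP; move/forallP: (hp a).
by apply/forallP => b; rewrite hp.
Qed.

Lemma group_set_quandle_aut : group_set quandle_aut.
Proof.
apply/group_setP; split; first by apply/quandle_autP => a b; rewrite !perm1.
move=> p q /quandle_autP hp /quandle_autP hq; apply/quandle_autP => a b.
by rewrite !permM hp hq.
Qed.

Canonical quandle_aut_group := Group group_set_quandle_aut.

Lemma Inn_sub_quandle_aut : Inn op \subset quandle_aut.
Proof.
rewrite gen_subG; apply/subsetP => p; rewrite inE => /existsP [y /forallP hy].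
apply/quandle_autP => a b; rewrite !(eqP (hy _)).
by case: opQ.
Qed.

Lemma rtransJ (g : {perm T}) (y : T) :
  g \in Inn op -> rtrans (g y) = rtrans y ^ g.
Proof.
move/(subsetP Inn_sub_quandle_aut)/quandle_autP => hg.
apply/permP => x; rewrite /conjg !permM !rtransE hg.
by rewrite -permM mulVg perm1.
Qed.

Hypothesis opC : connected_quandle op.

Lemma order_rtrans_connected (x y : T) : #[rtrans y] = #[rtrans x].
Proof. by case: (opC x y) => g gInn <-; rewrite rtransJ // orderJ. Qed.

Lemma type_annihilates_order (x : T) (n : nat) :
  type_annihilates op n <-> #[rtrans x] %| n.
Proof.
split=> [ann | dvd_n z y].
  by rewrite order_dvdn; apply/eqP/permP => z; rewrite rtransX ann perm1.
move: dvd_n; rewrite -(order_rtrans_connected x y) order_dvdn => /eqP rtransXn.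
by rewrite -rtransX rtransXn perm1.
Qed.

Lemma quandle_type_order (x : T) (N : nat) :
  is_quandle_type op N -> N = #[rtrans x].
Proof.
case=> N_gt0 annN minN; apply/eqP; rewrite eqn_leq.
rewrite minN ?order_gt0 //=; last exact/(type_annihilates_order x).
by apply: dvdn_leq => //; apply/(type_annihilates_order x).
Qed.

Lemma card_stab_connected (x : T) : #|'C_(Inn op)[x | 'P]| = #|Inn op| %/ #|T|.
Proof.
have orbitT : orbit 'P (Inn op) x = [set: T].
  by apply/setP => y; rewrite inE; apply/orbitP; case: (opC x y) => g; exists g.
rewrite -(card_orbit_stab 'P (Inn op) x) orbitT cardsT mulKn //.
by apply/card_gt0P; exists x.
Qed.

Lemma cycle_rtrans_sub_stab (x : T) : <[rtrans x]> \subset 'C_(Inn op)[x | 'P].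
Proof.
rewrite cycle_subG inE rtrans_Inn; apply/astab1P.
by rewrite /= /aperm rtrans_fix.
Qed.

End RightTranslations.

Theorem lemma3p6 (T : finType) (op : T -> T -> T) (N : nat) :
  is_quandle op -> connected_quandle op -> is_quandle_type op N ->
  N %| #|Inn op| %/ #|T|.
Proof.
move=> opQ opC typeN.
have [x _ | T0] := pickP T; last by rewrite (eq_card0 T0) divn0 dvdn0.
rewrite (quandle_type_order opQ opC x typeN) -(card_stab_connected opC x).
exact/cardSg/cycle_rtrans_sub_stab.
Qed.
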